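(* Let $n\in\mathbb{N}$, $\mathcal{P}_n,\mathcal{E}_n\subseteq\mathcal{D}(\mathcal{H}^{\otimes n})$, and $r>0$. Then $\overline{\zeta}_{\mathrm{GPO},r}(\mathcal{P}_n,\mathcal{E}_n)=\alpha_{n,r}(\mathcal{P}_n\|\mathcal{E}_n)$.
   Context: $\mathcal{H}$ is finite-dimensional; $\mathcal{D}$ denotes density operators; $T(X,Y)=\tfrac12\|X-Y\|_1$. Battery: qubit with basis $\{|0\rangle,|1\rangle\}$, $\pi_M=(1-\tfrac1M)|0\rangle\langle0|+\tfrac1M|1\rangle\langle1|$, $\Pi_M=\{\pi_{M'}:M'\in[M,\infty)\}$. The optimal error of dirty-battery work extraction at rate $r$ is $\overline{\zeta}_{\mathrm{GPO},r}(\mathcal{P}_n,\mathcal{E}_n)=\inf\{\varepsilon\in[0,1]:\exists\text{ CPTP }\mathcal{F}_n\text{ with }T(\mathcal{F}_n(\rho),|1\rangle\langle1|)\le\varepsilon\ \forall\rho\in\mathcal{P}_n\text{ and }\mathcal{F}_n(\tau)\in\Pi_{2^{nr}}\ \forall\tau\in\mathcal{E}_n\}$. The optimal type-I error is $\alpha_{n,r}(\mathcal{P}_n\|\mathcal{E}_n)=\inf\{\sup_{\rho\in\mathcal{P}_n}\operatorname{tr}[(I-E)\rho]:0\le E\le I,\ \sup_{\tau\in\mathcal{E}_n}\operatorname{tr}[E\tau]\le2^{-nr}\}$. *)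

From HB Require Import structures.
From mathcomp Require Import all_boot all_order all_algebra.
From mathcomp Require Import complex.
From mathcomp Require Import classical_sets boolp reals exp.

Set Implicit Arguments.
Unset Strict Implicit.
Unset Printing Implicit Defensive.

Import Order.TTheory GRing.Theory Num.Theory.
Local Open Scope ring_scope.
Local Open Scope classical_set_scope.

Section QDefs.
Variable R : realType.
Local Notation C := R[i].

Definition adjmx (m n : nat) (A : 'M[C]_(m, n)) : 'M[C]_(n, m) :=
  (map_mx Num.conj A)^T.

Definition psdmx (N : nat) (A : 'M[C]_N) : Prop :=
  adjmx A = A /\ forall v : 'cV[C]_N, 0 <= (adjmx v *m A *m v) 0 0.

Definition lownerle (N : nat) (A B : 'M[C]_N) : Prop := psdmx (B - A).

Definition density (N : nat) : set 'M[C]_N :=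
  [set rho | psdmx rho /\ \tr rho = 1].

Definition psd_sqrt (N : nat) (M : 'M[C]_N) : 'M[C]_N :=
  xget 0 [set B | psdmx B /\ B *m B = M].

Definition trnorm (N : nat) (A : 'M[C]_N) : R :=
  complex.Re (\tr (psd_sqrt (adjmx A *m A))).

Definition tdist (N : nat) (X Y : 'M[C]_N) : R := trnorm (X - Y) / 2.

(* Ampliation id_k (x) F of a map F : M_N -> M_M, acting on M_(k*N) with
   block (i,j) of X (i,j < k) given by entries X (mxvec_index i a) (mxvec_index j b). *)
Definition ampl (k N M : nat) (F : 'M[C]_N -> 'M[C]_M) (X : 'M[C]_(k * N))
    : 'M[C]_(k * M) :=
  \matrix_(p, q) \sum_(i < k) \sum_(j < k) \sum_(a < M) \sum_(b < M)
     (if (p == mxvec_index i a) && (q == mxvec_index j b) then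
        F (\matrix_(a', b') X (mxvec_index i a') (mxvec_index j b')) a b
      else 0).

Definition cptp (N M : nat) (F : {linear 'M[C]_N -> 'M[C]_M}) : Prop :=
  (forall (k : nat) (X : 'M[C]_(k * N)), psdmx X -> psdmx (@ampl k N M F X)) /\
  (forall X : 'M[C]_N, \tr (F X) = \tr X).

(* Battery qubit: |0> = ord0, |1> = ord_max. *)
Definition ket1proj : 'M[C]_2 := delta_mx ord_max ord_max.

Definition battery_pi (M : R) : 'M[C]_2 :=
  \matrix_(i, j) (if i == j then
                    (if i == ord0 then Complex (1 - M^-1) 0 else Complex (M^-1) 0)
                  else 0).

Definition battery_Pi (M : R) : set 'M[C]_2 :=
  [set A | exists M' : R, M <= M' /\ A = battery_pi M'].

(* Optimal error of dirty-battery work extraction at rate r. *)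
Definition zeta_GPO (N n : nat) (r : R) (P E : set 'M[C]_N) : R :=
  inf [set eps : R | 0 <= eps <= 1 /\
    exists F : {linear 'M[C]_N -> 'M[C]_2}, cptp F /\
      (forall rho, P rho -> tdist (F rho) ket1proj <= eps) /\
      (forall tau, E tau -> battery_Pi (2 `^ (n%:R * r)) (F tau))].

Definition alpha_err (N n : nat) (r : R) (P E : set 'M[C]_N) : R :=
  inf [set t : R | exists Em : 'M[C]_N,
    lownerle 0 Em /\ lownerle Em 1%:M /\
    (forall tau, E tau -> complex.Re (\tr (Em *m tau)) <= 2 `^ (- (n%:R * r))) /\
    t = sup [set complex.Re (\tr ((1%:M - Em) *m rho)) | rho in P]].

End QDefs.

(* Tests 0 <= E <= 1 and channels into the battery qubit correspond to each other.
   A channel F yields the test E with tr (E X) = <1|F X|1>: its type-I error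
   tr ((1 - E) rho) = <0|F rho|0> is at most T (F rho, |1><1|), and F tau = pi_M' with
   M' >= 2^(nr) gives tr (E tau) = 1/M' <= 2^(-nr).  Conversely, for
   E1 = (1 - d) E + d 2^(-nr) 1 the measure-and-prepare channel
   rho |-> tr ((1 - E1) rho) |0><0| + tr (E1 rho) |1><1| sends tau to
   pi_(1 / tr (E1 tau)) with 1 / tr (E1 tau) >= 2^(nr), and its error exceeds that of
   E by at most d; letting d -> 0 shows that the two infima coincide. *)

From HB Require Import structures.
From mathcomp Require Import all_boot all_order all_algebra.
From mathcomp Require Import complex.
From mathcomp Require Import classical_sets boolp reals exp.
From mathcomp Require Import sesquilinear spectral ring lra.

Set Implicit Arguments.
Unset Strict Implicit.
Unset Printing Implicit Defensive.

Import Order.TTheory GRing.Theory Num.Theory.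
Local Open Scope ring_scope.
Local Open Scope classical_set_scope.

Local Notation i0 := (ord0 : 'I_2).
Local Notation i1 := (ord_max : 'I_2).

Section PositiveMatrices.
Variable R : realType.
Local Notation C := R[i].
Implicit Types (m n N : nat).

Lemma adjmxE m n (A : 'M[C]_(m, n)) i j : adjmx A i j = (A j i)^*.
Proof. by rewrite !mxE. Qed.

Lemma adjmxK m n (A : 'M[C]_(m, n)) : adjmx (adjmx A) = A.
Proof. by apply/matrixP=> i j; rewrite !mxE conjCK. Qed.

Lemma adjmx_mul m n p (A : 'M[C]_(m, n)) (B : 'M[C]_(n, p)) :
  adjmx (A *m B) = adjmx B *m adjmx A.
Proof. by rewrite /adjmx map_mxM trmx_mul. Qed.

Lemma adjmxD m n (A B : 'M[C]_(m, n)) : adjmx (A + B) = adjmx A + adjmx B.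
Proof. by apply/matrixP=> i j; rewrite !mxE rmorphD. Qed.

Lemma adjmxN m n (A : 'M[C]_(m, n)) : adjmx (- A) = - adjmx A.
Proof. by apply/matrixP=> i j; rewrite !mxE rmorphN. Qed.

Lemma adjmxB m n (A B : 'M[C]_(m, n)) : adjmx (A - B) = adjmx A - adjmx B.
Proof. by rewrite adjmxD adjmxN. Qed.

Lemma adjmxZ m n c (A : 'M[C]_(m, n)) : adjmx (c *: A) = c^* *: adjmx A.
Proof. by apply/matrixP=> i j; rewrite !mxE rmorphM. Qed.

Lemma adjmx0 m n : adjmx (0 : 'M[C]_(m, n)) = 0.
Proof. by apply/matrixP=> i j; rewrite !mxE conjC0. Qed.

Lemma adjmx1 N : adjmx (1%:M : 'M[C]_N) = 1%:M.
Proof.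
by apply/matrixP=> i j; rewrite !mxE eq_sym; case: eqP; rewrite ?conjC1 ?conjC0.
Qed.

Lemma mxtrace_adjmx N (A : 'M[C]_N) : \tr (adjmx A) = (\tr A)^*.
Proof. by rewrite /adjmx mxtrace_tr trace_map_mx. Qed.

Lemma adjmx_eqP N (A : 'M[C]_N) :
  adjmx A = A <-> forall i j, (A j i)^* = A i j.
Proof.
split=> [/matrixP hA i j | hA]; first by have := hA i j; rewrite !mxE.
by apply/matrixP=> i j; rewrite !mxE hA.
Qed.

Lemma adjmx_hermsym N (A : 'M[C]_N) : adjmx A = A -> A \is hermsymmx.
Proof.
by move=> hA; apply/is_hermitianmxP; rewrite expr0 scale1r -map_trmx -/(adjmx A) hA.
Qed.

Definition qform N (A : 'M[C]_N) (v : 'cV[C]_N) : C := (adjmx v *m A *m v) 0 0.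

Lemma qformE N (A : 'M[C]_N) v :
  qform A v = \sum_p \sum_q (v p 0)^* * A p q * v q 0.
Proof.
rewrite /qform mxE; under eq_bigr => q _ do rewrite mxE mulr_suml.
rewrite exchange_big /=; apply: eq_bigr => p _; apply: eq_bigr => q _.
by rewrite !mxE.
Qed.

Lemma qformD N (A B : 'M[C]_N) v : qform (A + B) v = qform A v + qform B v.
Proof. by rewrite /qform mulmxDr mulmxDl mxE. Qed.

Lemma qformZ N c (A : 'M[C]_N) v : qform (c *: A) v = c * qform A v.
Proof. by rewrite /qform -scalemxAr -scalemxAl mxE. Qed.

Lemma qform_delta N (A : 'M[C]_N) i : qform A (delta_mx i 0) = A i i.
Proof.
rewrite qformE (bigD1 i) //= [X in _ + X]big1 => [|j /negbTE ji]; last first.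
  by rewrite big1 // => k _; rewrite !mxE ji conjC0 !mul0r.
rewrite addr0 (bigD1 i) //= [X in _ + X]big1 => [|j /negbTE ji]; last first.
  by rewrite !mxE ji mulr0.
by rewrite addr0 !mxE !eqxx conjC1 mulr1 mul1r.
Qed.

Lemma qform_mxtrace N (A : 'M[C]_N) v : qform A v = \tr (A *m (v *m adjmx v)).
Proof. by rewrite /qform mulmxA mxtrace_mulC mulmxA /mxtrace big_ord1. Qed.

Lemma psdmx_adj N (A : 'M[C]_N) : psdmx A -> adjmx A = A.
Proof. by case. Qed.

Lemma psdmx_qform N (A : 'M[C]_N) v : psdmx A -> 0 <= qform A v.
Proof. by case=> _; apply. Qed.

Lemma psdmx_diag N (A : 'M[C]_N) i : psdmx A -> 0 <= A i i.
Proof. by move=> /(psdmx_qform (delta_mx i 0)); rewrite qform_delta. Qed.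

Lemma psdmx0 N : psdmx (0 : 'M[C]_N).
Proof. by split=> [|v]; rewrite ?adjmx0 // /qform mulmx0 mul0mx mxE. Qed.

Lemma psdmx1 N : psdmx (1%:M : 'M[C]_N).
Proof.
split=> [|v]; first exact: adjmx1.
rewrite -/(qform _ v) qformE sumr_ge0 // => i _.
rewrite (bigD1 i) //= big1 => [|j /negbTE ji]; last by rewrite mxE eq_sym ji mulr0 mul0r.
by rewrite addr0 mxE eqxx mulr1 mulrC mul_conjC_ge0.
Qed.

Lemma lownerle0 N (A : 'M[C]_N) : lownerle 0 A = psdmx A.
Proof. by rewrite /lownerle subr0. Qed.

Lemma psdmxD N (A B : 'M[C]_N) : psdmx A -> psdmx B -> psdmx (A + B).
Proof.
move=> pA pB; split=> [|v]; first by rewrite adjmxD !psdmx_adj.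
by rewrite -/(qform _ v) qformD addr_ge0 // psdmx_qform.
Qed.

Lemma psdmxZ N c (A : 'M[C]_N) : 0 <= c -> psdmx A -> psdmx (c *: A).
Proof.
move=> c0 pA; split=> [|v]; first by rewrite adjmxZ psdmx_adj // geC0_conj.
by rewrite -/(qform _ v) qformZ mulr_ge0 // psdmx_qform.
Qed.

Lemma psdmx_outer N (u : 'cV[C]_N) : psdmx (u *m adjmx u).
Proof.
split=> [|v]; first by rewrite adjmx_mul adjmxK.
have -> : adjmx v *m (u *m adjmx u) *m v = (adjmx v *m u) *m adjmx (adjmx v *m u).
  by rewrite adjmx_mul adjmxK !mulmxA.
by rewrite mxE big_ord1 adjmxE mul_conjC_ge0.
Qed.

Lemma qform_conj_diag N (P X : 'M[C]_N) i :
  (P *m X *m adjmx P) i i = qform X (adjmx (row i P)).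
Proof.
rewrite qformE !mxE; under eq_bigr => k _ do rewrite !mxE mulr_suml.
rewrite exchange_big /=; apply: eq_bigr => p _; apply: eq_bigr => q _.
by rewrite !mxE conjCK.
Qed.

(* With A = P^* diag(d) P for a unitary P, tr (A B) = sum_i d_i (P B P^* )_ii, where
   d_i >= 0 and (P B P^* )_ii >= 0. *)
Lemma mxtrace_psdmx_mul_ge0 N (A B : 'M[C]_N) :
  psdmx A -> psdmx B -> 0 <= \tr (A *m B).
Proof.
move=> pA pB; have := hermitian_normalmx (adjmx_hermsym (psdmx_adj pA)).
move/orthomx_spectralP; set P := spectralmx A; set D := spectral_diag A.
have uP := spectral_unitarymx A.
rewrite invmx_unitary // -map_trmx -/(adjmx P) => eA.
have PP : P *m adjmx P = 1%:M by rewrite /adjmx map_trmx; apply/unitarymxP.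
have eD : P *m A *m adjmx P = diag_mx D.
  by rewrite eA !mulmxA PP mul1mx -mulmxA PP mulmx1.
have -> : \tr (A *m B) = \tr ((P *m B *m adjmx P) *m diag_mx D).
  by rewrite eA -!mulmxA mxtrace_mulC !mulmxA [RHS]mxtrace_mulC !mulmxA.
rewrite mul_mx_diag /mxtrace sumr_ge0 // => i _; rewrite mxE.
have -> : D 0 i = (P *m A *m adjmx P) i i by rewrite eD mxE eqxx.
by rewrite !qform_conj_diag mulr_ge0 // psdmx_qform.
Qed.

End PositiveMatrices.

Section MxvecIndex.
Variables k N : nat.

Definition mxvec_unindex (p : 'I_(k * N)) : 'I_k * 'I_N :=
  enum_val (cast_ord (esym (mxvec_cast k N)) p).

Lemma mxvec_indexK i a : mxvec_unindex (mxvec_index i a) = (i, a).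
Proof. by rewrite /mxvec_unindex /mxvec_index cast_ordK enum_rankK. Qed.

Lemma eq_mxvec_index (i i' : 'I_k) (a a' : 'I_N) :
  (mxvec_index i a == mxvec_index i' a') = (i == i') && (a == a').
Proof.
apply/eqP/andP => [/(congr1 mxvec_unindex)|[/eqP-> /eqP->]] //.
by rewrite !mxvec_indexK => -[-> ->].
Qed.

Lemma big_mxvec_index (V : nmodType) (f : 'I_(k * N) -> V) :
  \sum_p f p = \sum_i \sum_a f (mxvec_index i a).
Proof.
rewrite (reindex (uncurry (@mxvec_index k N))) /=; last exact: curry_mxvec_bij.
by rewrite pair_big /=; apply: eq_bigr => -[i a].
Qed.

End MxvecIndex.

Section CompletePositivity.
Variable R : realType.
Local Notation C := R[i].

Definition blockmx k N (X : 'M[C]_(k * N)) (i j : 'I_k) : 'M[C]_N :=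
  \matrix_(a, b) X (mxvec_index i a) (mxvec_index j b).

Lemma ampl_mxvec_index k N M (F : 'M[C]_N -> 'M[C]_M) (X : 'M[C]_(k * N)) i a j b :
  ampl F X (mxvec_index i a) (mxvec_index j b) = F (blockmx X i j) a b.
Proof.
rewrite mxE (bigD1 i) //= [X in _ + X]big1 => [|i' /negbTE ni]; last first.
  by do 3!rewrite big1 // => ? _; rewrite eq_mxvec_index (eq_sym i) ni.
rewrite addr0 (bigD1 j) //= [X in _ + X]big1 => [|j' /negbTE nj]; last first.
  by do 2!rewrite big1 // => ? _; rewrite [X in _ && X]eq_mxvec_index (eq_sym j) nj andbF.
rewrite addr0 (bigD1 a) //= [X in _ + X]big1 => [|a' /negbTE na]; last first.
  by rewrite big1 // => ? _; rewrite eq_mxvec_index (eq_sym a) na andbF.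
rewrite addr0 (bigD1 b) //= [X in _ + X]big1 => [|b' /negbTE nb]; last first.
  by rewrite [X in _ && X]eq_mxvec_index (eq_sym b) nb !andbF.
by rewrite addr0 !eqxx.
Qed.

Lemma qform_mxvec k N (A : 'M[C]_(k * N)) v : qform A v =
  \sum_i \sum_a \sum_j \sum_b (v (mxvec_index i a) 0)^* *
     A (mxvec_index i a) (mxvec_index j b) * v (mxvec_index j b) 0.
Proof.
rewrite qformE big_mxvec_index; apply: eq_bigr => i _; apply: eq_bigr => a _.
by rewrite big_mxvec_index.
Qed.

Lemma adjmx_mxvecP k N (A : 'M[C]_(k * N)) :
  (forall i a j b, (A (mxvec_index j b) (mxvec_index i a))^* =
                    A (mxvec_index i a) (mxvec_index j b)) -> adjmx A = A.
Proof.
move=> hA; apply/adjmx_eqP => p q.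
by case/mxvec_indexP: p => i a; case/mxvec_indexP: q => j b; apply: hA.
Qed.

Lemma qform_mxvec1 N (A : 'M[C]_(1 * N)) (v : 'cV[C]_N) :
  qform A (\col_p v (mxvec_unindex p).2 0) =
  qform (\matrix_(a, b) A (mxvec_index ord0 a) (mxvec_index ord0 b)) v.
Proof.
rewrite qform_mxvec qformE big_ord1; apply: eq_bigr => a _.
by rewrite big_ord1; apply: eq_bigr => b _; rewrite !mxE !mxvec_indexK.
Qed.

(* The case k = 1 of complete positivity, with 'I_(1 * N) read as 'I_N. *)
Lemma cptp_psdmx N M (F : {linear 'M[C]_N -> 'M[C]_M}) (Y : 'M[C]_N) :
  cptp F -> psdmx Y -> psdmx (F Y).
Proof.
move=> [cpF _] pY.
pose X : 'M[C]_(1 * N) := \matrix_(p, q) Y (mxvec_unindex p).2 (mxvec_unindex q).2.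
have XY : \matrix_(a, b) X (mxvec_index ord0 a) (mxvec_index ord0 b) = Y.
  by apply/matrixP => a b; rewrite !mxE !mxvec_indexK.
have pX : psdmx X.
  split=> [|v].
    by apply/adjmx_eqP => p q; rewrite !mxE ((adjmx_eqP _).1 (psdmx_adj pY)).
  have -> : v = \col_p (\col_a v (mxvec_index ord0 a) 0) (mxvec_unindex p).2 0.
    apply/matrixP => p j; rewrite !mxE ord1.
    by case/mxvec_indexP: p => i a; rewrite ord1 mxvec_indexK.
  by rewrite -/(qform _ _) qform_mxvec1 XY psdmx_qform.
have -> : F Y = \matrix_(a, b) ampl F X (mxvec_index ord0 a) (mxvec_index ord0 b).
  by apply/matrixP => a b; rewrite mxE ampl_mxvec_index -XY.
move: (cpF 1%N X pX); set A := ampl F X => pA; clearbody A; split=> [|v].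
  by apply/adjmx_eqP => a b; rewrite !mxE ((adjmx_eqP _).1 (psdmx_adj pA)).
by have := psdmx_qform (\col_p v (mxvec_unindex p).2 0) pA; rewrite qform_mxvec1.
Qed.

End CompletePositivity.

Section MeasurePrepare.
Variable R : realType.
Local Notation C := R[i].

Lemma blockmx_adj k N (X : 'M[C]_(k * N)) i j :
  adjmx X = X -> blockmx X j i = adjmx (blockmx X i j).
Proof. by move=> /adjmx_eqP hX; apply/matrixP => a b; rewrite !mxE hX. Qed.

Lemma mxtrace_mul_adj N (B Y : 'M[C]_N) :
  adjmx B = B -> \tr (B *m adjmx Y) = (\tr (B *m Y))^*.
Proof. by move=> hB; rewrite -mxtrace_adjmx adjmx_mul hB mxtrace_mulC. Qed.

(* The form is tr ((w w^* (x) B) X), the trace of a product of two psd matrices. *)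
Lemma blockmx_form_ge0 k N (B : 'M[C]_N) (X : 'M[C]_(k * N)) (w : 'I_k -> C) :
  psdmx B -> psdmx X ->
  0 <= \sum_i \sum_j (w i)^* * \tr (B *m blockmx X i j) * w j.
Proof.
move=> pB pX; pose G : 'M[C]_(k * N) := \matrix_(p, q)
  (w (mxvec_unindex p).1 * (w (mxvec_unindex q).1)^* *
   B (mxvec_unindex p).2 (mxvec_unindex q).2).
have pG : psdmx G.
  split=> [|u].
    apply/adjmx_eqP => p q; rewrite !mxE !rmorphM /= conjCK.
    rewrite ((adjmx_eqP _).1 (psdmx_adj pB)); ring.
  pose z : 'cV[C]_N := \col_c \sum_i (w i)^* * u (mxvec_index i c) 0.
  rewrite -/(qform _ _) (_ : qform G u = qform B z) ?psdmx_qform //.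
  rewrite qform_mxvec qformE exchange_big /=; apply: eq_bigr => a _.
  under eq_bigr => i _ do rewrite exchange_big /=.
  rewrite exchange_big /=; apply: eq_bigr => b _.
  rewrite !mxE rmorph_sum !mulr_suml; apply: eq_bigr => i _.
  rewrite mulr_sumr; apply: eq_bigr => j _.
  rewrite !mxE !mxvec_indexK /= rmorphM /= conjCK; ring.
suff <- : \tr (G *m X) = \sum_i \sum_j (w i)^* * \tr (B *m blockmx X i j) * w j.
  exact: mxtrace_psdmx_mul_ge0.
rewrite /mxtrace big_mxvec_index.
under eq_bigr => j _ do under eq_bigr => c _ do rewrite mxE big_mxvec_index.
under eq_bigr => j _ do rewrite exchange_big /=.
rewrite exchange_big /=; apply: eq_bigr => i _; apply: eq_bigr => j _.
rewrite mulr_sumr mulr_suml; apply: eq_bigr => c _.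
rewrite mxE mulr_sumr mulr_suml; apply: eq_bigr => e _.
rewrite !mxE !mxvec_indexK /=; ring.
Qed.

Definition measure_prepare M N (B : 'I_M -> 'M[C]_N) (X : 'M[C]_N) : 'M[C]_M :=
  \matrix_(a, b) (if a == b then \tr (B a *m X) else 0).

Lemma measure_prepare_is_linear M N (B : 'I_M -> 'M[C]_N) :
  linear (measure_prepare B).
Proof.
move=> c X Y; apply/matrixP => a b; rewrite !mxE; case: eqP => _.
  by rewrite mulmxDr -scalemxAr linearD linearZ.
by rewrite mulr0 addr0.
Qed.

HB.instance Definition _ M N (B : 'I_M -> 'M[C]_N) :=
  GRing.isLinear.Build C 'M[C]_N 'M[C]_M *:%R (measure_prepare B)
    (measure_prepare_is_linear B).

Lemma measure_prepare_cp M N (B : 'I_M -> 'M[C]_N) k (X : 'M[C]_(k * N)) :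
  (forall a, psdmx (B a)) -> psdmx X -> psdmx (ampl (measure_prepare B) X).
Proof.
move=> pB pX; split.
  apply: adjmx_mxvecP => i a j b; rewrite !ampl_mxvec_index !mxE.
  case: (eqVneq a b) => [<-|_]; last by rewrite conjC0.
  by rewrite (blockmx_adj _ _ (psdmx_adj pX)) mxtrace_mul_adj ?conjCK ?psdmx_adj.
move=> v; rewrite -/(qform _ _) qform_mxvec exchange_big /= sumr_ge0 // => a _.
rewrite (eq_bigr (fun i => \sum_j (v (mxvec_index i a) 0)^* *
  \tr (B a *m blockmx X i j) * v (mxvec_index j a) 0)) ?blockmx_form_ge0 //.
move=> i _; apply: eq_bigr => j _.
rewrite (bigD1 a) //= ampl_mxvec_index mxE eqxx big1 ?addr0 // => b nb.
by rewrite ampl_mxvec_index mxE eq_sym (negbTE nb) mulr0 mul0r.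
Qed.

Lemma measure_prepare_cptp M N (B : 'I_M -> 'M[C]_N) :
  (forall a, psdmx (B a)) -> \sum_a B a = 1%:M -> cptp (measure_prepare B).
Proof.
move=> pB sB; split=> [k X|X]; first exact: measure_prepare_cp.
rewrite /mxtrace; under eq_bigr => a _ do rewrite mxE eqxx.
by rewrite -linear_sum -mulmx_suml sB mul1mx.
Qed.

End MeasurePrepare.

Section QubitTraceDistance.
Variable R : realType.
Local Notation C := R[i].

Lemma Re_ler (x y : C) : x <= y -> complex.Re x <= complex.Re y.
Proof. by rewrite lecE => /andP[]. Qed.

Lemma ord2P (i : 'I_2) : i = i0 \/ i = i1.
Proof. by case: i => -[|[|//]] ?; [left|right]; apply: val_inj. Qed.

Lemma sum_ord2 (V : nmodType) (f : 'I_2 -> V) : \sum_i f i = f i0 + f i1.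
Proof. by rewrite big_ord_recl big_ord1; congr (_ + f _); apply: val_inj. Qed.

Lemma matrix2P (A B : 'M[C]_2) :
  A i0 i0 = B i0 i0 -> A i0 i1 = B i0 i1 -> A i1 i0 = B i1 i0 ->
  A i1 i1 = B i1 i1 -> A = B.
Proof.
move=> h00 h01 h10 h11; apply/matrixP => i j.
by case: (ord2P i) => ->; case: (ord2P j) => ->.
Qed.

Lemma mulmx2E (A B : 'M[C]_2) i j :
  (A *m B) i j = A i i0 * B i0 j + A i i1 * B i1 j.
Proof. by rewrite mxE sum_ord2. Qed.

Lemma mxtrace2E (A : 'M[C]_2) : \tr A = A i0 i0 + A i1 i1.
Proof. exact: sum_ord2. Qed.

Lemma scalar_mx2E (c : C) (i j : 'I_2) : (c%:M : 'M[C]_2) i j = if i == j then c else 0.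
Proof. by rewrite mxE; case: eqP. Qed.

Lemma psdmx2_offdiag_eq0 (B : 'M[C]_2) :
  psdmx B -> B i0 i0 = 0 -> B i1 i1 = 0 -> B i0 i1 = 0.
Proof.
move=> pB b00 b11; have e10 := (adjmx_eqP _).1 (psdmx_adj pB) i1 i0.
pose v : 'cV[C]_2 := \col_i (if i == i0 then 1 else - (B i0 i1)^*).
have := psdmx_qform v pB; rewrite qformE !sum_ord2 !mxE /= -e10 b00 b11.
rewrite conjC1 !mul1r mulr0 !mul0r !add0r addr0 rmorphN /= conjCK.
rewrite mulr1 mulrN mulNr -opprD oppr_ge0 => h.
have : B i0 i1 * (B i0 i1)^* = 0.
  by apply/eqP; rewrite eq_le mul_conjC_ge0 andbT (le_trans _ h) // lerDr mul_conjC_ge0.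
by move/eqP; rewrite mulf_eq0 conjC_eq0 orbb => /eqP.
Qed.

(* If the off-diagonal entry y were nonzero, (B^2)_01 = y (B_00 + B_11) = 0 would
   force both (nonnegative) diagonal entries to vanish. *)
Lemma psdmx2_sqr_scalar (B : 'M[C]_2) s :
  psdmx B -> B *m B = s%:M -> B = (sqrtC s)%:M.
Proof.
move=> pB BB; have e10 := (adjmx_eqP _).1 (psdmx_adj pB) i1 i0.
have [x0 z0] := (psdmx_diag i0 pB, psdmx_diag i1 pB).
have entry i j : (B *m B) i j = (s%:M : 'M[C]_2) i j by rewrite BB.
have e00 := entry i0 i0; have e11 := entry i1 i1; have e01 := entry i0 i1.
rewrite !mulmx2E !scalar_mx2E !eqxx /= -e10 in e00 e11 e01.
have y0 : B i0 i1 = 0.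
  have [//|yn0] := eqVneq (B i0 i1) 0.
  have /eqP : B i0 i0 + B i1 i1 = 0.
    move: e01; rewrite [B i0 i0 * _]mulrC -mulrDr => /eqP.
    by rewrite mulf_eq0 (negbTE yn0) => /eqP.
  by rewrite paddr_eq0 // => /andP[/eqP ? /eqP ?]; apply: psdmx2_offdiag_eq0.
rewrite y0 conjC0 mulr0 ?mul0r addr0 ?add0r -expr2 in e00 e11.
apply: matrix2P; rewrite scalar_mx2E.
- by rewrite -e00 sqrCK.
- by rewrite y0.
- by rewrite -e10 y0 conjC0.
- by rewrite -e11 sqrCK.
Qed.

Lemma psd_sqrt_scalar2 (s : C) : 0 <= s -> psd_sqrt (s%:M : 'M[C]_2) = (sqrtC s)%:M.
Proof.
move=> s0; have : exists B : 'M[C]_2, psdmx B /\ B *m B = s%:M.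
  exists (sqrtC s)%:M; split; last by rewrite -scalar_mxM -expr2 sqrtCK.
  by rewrite -scalemx1; apply: psdmxZ; [rewrite sqrtC_ge0 | exact: psdmx1].
by move/(xgetPex 0) => [pB BB]; apply: psdmx2_sqr_scalar.
Qed.

Lemma adjmx_mul_traceless2 (A : 'M[C]_2) : adjmx A = A -> \tr A = 0 ->
  adjmx A *m A = (A i0 i0 * A i0 i0 + A i0 i1 * (A i0 i1)^*)%:M.
Proof.
move=> hA tA; rewrite hA; have e10 := (adjmx_eqP _).1 hA i1 i0.
have e11 : A i1 i1 = - A i0 i0 by apply/eqP; rewrite -addr_eq0 addrC -mxtrace2E tA.
by apply: matrix2P; rewrite mulmx2E scalar_mx2E /= -?e10 ?e11; ring.
Qed.

(* A := G - |1><1| is traceless Hermitian, so A^* A is scalar and has an explicit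
   square root. *)
Lemma tdist_ket1 (G : 'M[C]_2) : adjmx G = G -> \tr G = 1 ->
  tdist G (ket1proj R) = complex.Re (sqrtC (G i0 i0 * G i0 i0 + G i0 i1 * (G i0 i1)^*)).
Proof.
move=> hG tG; set A := G - ket1proj R.
have hA : adjmx A = A.
  rewrite /A adjmxB hG; congr (_ - _); apply/adjmx_eqP => i j.
  by rewrite !mxE; case: (i == _); case: (j == _); rewrite ?conjC1 ?conjC0.
have tA : \tr A = 0 by rewrite /A linearB /= tG mxtrace2E !mxE /= add0r subrr.
have [A00 A01] : A i0 i0 = G i0 i0 /\ A i0 i1 = G i0 i1 by rewrite !mxE /= !subr0.
rewrite /tdist /trnorm adjmx_mul_traceless2 // A00 A01 psd_sqrt_scalar2; last first.
  by rewrite addr_ge0 ?mul_conjC_ge0 // -{2}((adjmx_eqP _).1 hG i0 i0) mul_conjC_ge0.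
rewrite mxtrace_scalar raddfMn /=; set x := complex.Re _.
by rewrite -[x *+ 2]mulr_natr mulfK // pnatr_eq0.
Qed.

Lemma tdist_ket1_ge (G : 'M[C]_2) : psdmx G -> \tr G = 1 ->
  complex.Re (G i0 i0) <= tdist G (ket1proj R).
Proof.
move=> pG tG; rewrite tdist_ket1 ?psdmx_adj //.
have g0 := psdmx_diag i0 pG.
have : G i0 i0 <= sqrtC (G i0 i0 * G i0 i0 + G i0 i1 * (G i0 i1)^*).
  rewrite -{1}(sqrCK g0) expr2 ler_sqrtC ?nnegrE ?addr_ge0 ?mul_conjC_ge0 ?mulr_ge0 //.
  by rewrite lerDl mul_conjC_ge0.
exact: Re_ler.
Qed.

Lemma tdist_ket1_diag (G : 'M[C]_2) : psdmx G -> G i0 i1 = 0 -> \tr G = 1 ->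
  tdist G (ket1proj R) = complex.Re (G i0 i0).
Proof.
move=> pG g01 tG; rewrite tdist_ket1 ?psdmx_adj // g01 mul0r addr0 -expr2 sqrCK //.
exact: psdmx_diag.
Qed.

End QubitTraceDistance.

Section Battery.
Variable R : realType.
Local Notation C := R[i].

Definition binary_povm N (E1 : 'M[C]_N) (a : 'I_2) : 'M[C]_N :=
  if a == i0 then 1%:M - E1 else E1.

Lemma binary_povm_psd N (E1 : 'M[C]_N) a :
  lownerle 0 E1 -> lownerle E1 1%:M -> psdmx (binary_povm E1 a).
Proof. by rewrite /lownerle subr0 /binary_povm; case: ifP. Qed.

Lemma sum_binary_povm N (E1 : 'M[C]_N) : \sum_a binary_povm E1 a = 1%:M.
Proof. by rewrite sum_ord2 /binary_povm /= subrK. Qed.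

Lemma measure_prepare_binary N (E1 rho : 'M[C]_N) (y : R) :
  \tr rho = 1 -> \tr (E1 *m rho) = (y%:C)%C ->
  measure_prepare (binary_povm E1) rho = battery_pi y^-1.
Proof.
move=> tr1 trE1; apply: matrix2P; rewrite !mxE /binary_povm /= ?invrK //.
rewrite mulmxBl mul1mx linearB /= tr1 trE1.
by rewrite -[((1 - y) +i* 0)%C]/((1 - y)%:C)%C rmorphB rmorph1.
Qed.

Lemma measure_prepare_binary_cptp N (E1 : 'M[C]_N) :
  lownerle 0 E1 -> lownerle E1 1%:M -> cptp (measure_prepare (binary_povm E1)).
Proof.
move=> E1ge0 E1le1; apply: measure_prepare_cptp; last exact: sum_binary_povm.
by move=> a; apply: binary_povm_psd.
Qed.

Lemma tdist_measure_prepare_binary N (E1 rho : 'M[C]_N) :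
  lownerle 0 E1 -> lownerle E1 1%:M -> psdmx rho -> \tr rho = 1 ->
  tdist (measure_prepare (binary_povm E1) rho) (ket1proj R) =
  complex.Re (\tr ((1%:M - E1) *m rho)).
Proof.
move=> E1ge0 E1le1 prho tr1; have [_ trF] := measure_prepare_binary_cptp E1ge0 E1le1.
rewrite tdist_ket1_diag ?mxE // ?trF //.
exact: cptp_psdmx (measure_prepare_binary_cptp E1ge0 E1le1) prho.
Qed.

End Battery.

Lemma sup_le_ge0 (R : realType) (S : set R) c : 0 <= c -> ubound S c -> sup S <= c.
Proof.
move=> c0 Sc; have [->|S0] := eqVneq S set0; first by rewrite sup0.
by apply: ge_sup => //; apply/set0P.
Qed.

Section ChannelsAndTests.
Variable R : realType.
Local Notation C := R[i].
Implicit Types (N n : nat) (r : R).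

Definition gpo_errors N n r (P E : set 'M[C]_N) : set R :=
  [set eps : R | 0 <= eps <= 1 /\
    exists F : {linear 'M[C]_N -> 'M[C]_2}, cptp F /\
      (forall rho, P rho -> tdist (F rho) (ket1proj R) <= eps) /\
      (forall tau, E tau -> battery_Pi (2 `^ (n%:R * r)) (F tau))].

Definition type1_error N (P : set 'M[C]_N) (Em : 'M[C]_N) : R :=
  sup [set complex.Re (\tr ((1%:M - Em) *m rho)) | rho in P].

Definition type1_errors N n r (P E : set 'M[C]_N) : set R :=
  [set t : R | exists Em : 'M[C]_N,
    lownerle 0 Em /\ lownerle Em 1%:M /\
    (forall tau, E tau -> complex.Re (\tr (Em *m tau)) <= 2 `^ (- (n%:R * r))) /\
    t = type1_error P Em].

Lemma zeta_GPOE N n r (P E : set 'M[C]_N) : zeta_GPO n r P E = inf (gpo_errors n r P E).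
Proof. by []. Qed.

Lemma alpha_errE N n r (P E : set 'M[C]_N) : alpha_err n r P E = inf (type1_errors n r P E).
Proof. by []. Qed.

Section Type1Error.
Variables (N : nat) (P : set 'M[C]_N) (Em : 'M[C]_N).
Hypotheses (hP : P `<=` density (N:=N)).
Hypotheses (Em_ge0 : lownerle 0 Em) (Em_le1 : lownerle Em 1%:M).

Lemma type1_term_bounds rho : P rho ->
  0 <= complex.Re (\tr ((1%:M - Em) *m rho)) <= 1.
Proof.
move=> /hP[prho tr1]; apply/andP; split.
  exact: Re_ler (mxtrace_psdmx_mul_ge0 Em_le1 prho).
rewrite mulmxBl mul1mx linearB /= tr1 raddfB /= lerBlDr lerDl.
by apply: Re_ler (mxtrace_psdmx_mul_ge0 _ prho); rewrite -lownerle0.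
Qed.

Lemma type1_error_ge rho : P rho ->
  complex.Re (\tr ((1%:M - Em) *m rho)) <= type1_error P Em.
Proof.
move=> Prho; apply: ub_le_sup; last by exists rho.
by exists 1 => _ [rho' /type1_term_bounds/andP[_ ?] <-].
Qed.

Lemma type1_error_ge0 : 0 <= type1_error P Em.
Proof.
rewrite /type1_error; set S := [set _ | _ in P].
have [->|/set0P[_ [rho Prho _]]] := eqVneq S set0; first by rewrite sup0.
by apply: le_trans (type1_error_ge Prho); case/andP: (type1_term_bounds Prho).
Qed.

Lemma type1_error_le1 : type1_error P Em <= 1.
Proof. by apply: sup_le_ge0 => // _ [rho /type1_term_bounds/andP[_ ?] <-]. Qed.

End Type1Error.

Definition effectmx N (F : 'M[C]_N -> 'M[C]_2) : 'M[C]_N :=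
  \matrix_(i, j) F (delta_mx j i) i1 i1.

Lemma mxtrace_effectmx N (F : {linear 'M[C]_N -> 'M[C]_2}) X :
  \tr (effectmx F *m X) = F X i1 i1.
Proof.
rewrite /mxtrace; under eq_bigr => k _ do rewrite mxE.
rewrite exchange_big [in RHS](matrix_sum_delta X) linear_sum summxE.
apply: eq_bigr => i _; rewrite linear_sum summxE; apply: eq_bigr => j _.
by rewrite linearZ [RHS]mxE [effectmx _ _ _]mxE; apply: mulrC.
Qed.

Definition hermpart N (A : 'M[C]_N) : 'M[C]_N := 2^-1 *: (A + adjmx A).

Lemma adjmx_hermpart N (A : 'M[C]_N) : adjmx (hermpart A) = hermpart A.
Proof.
have half_real : (2^-1 : C) \is Num.real by rewrite ger0_real // invr_ge0 ler0n.
by rewrite adjmxZ adjmxD adjmxK conj_Creal // addrC.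
Qed.

Lemma mxtrace_hermpart_mul N (A X : 'M[C]_N) : adjmx X = X ->
  \tr (A *m X) \is Num.real -> \tr (hermpart A *m X) = \tr (A *m X).
Proof.
move=> hX /conj_Creal hAX; rewrite -scalemxAl mulmxDl linearZ linearD /=.
have -> : \tr (adjmx A *m X) = (\tr (A *m X))^*.
  by rewrite -{1}hX -adjmx_mul mxtrace_adjmx mxtrace_mulC.
rewrite hAX; set x := \tr _.
by rewrite -[x + x]mulr2n -[x *+ 2]mulr_natl mulKf // pnatr_eq0.
Qed.

(* The Hermitian part spares proving that effectmx F is Hermitian; on psd X it
   does not change tr (E X). *)
Lemma mxtrace_channel_test N (F : {linear 'M[C]_N -> 'M[C]_2}) X :
  cptp F -> psdmx X -> \tr (hermpart (effectmx F) *m X) = F X i1 i1.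
Proof.
move=> cpF pX; rewrite mxtrace_hermpart_mul ?psdmx_adj ?mxtrace_effectmx //.
exact/ger0_real/psdmx_diag/cptp_psdmx.
Qed.

End ChannelsAndTests.

Section SmoothedTest.
Variable R : realType.
Local Notation C := R[i].
Variables (N : nat) (Em : 'M[C]_N) (e q : R).
Hypotheses (e_ge0 : 0 <= e) (e_le1 : e <= 1) (q_ge0 : 0 <= q) (q_le1 : q <= 1).

Definition smoothed_test : 'M[C]_N :=
  ((1 - e)%:C)%C *: Em + ((e * q)%:C)%C *: 1%:M.

Lemma smoothed_test_ge0 : psdmx Em -> lownerle 0 smoothed_test.
Proof.
move=> pEm; rewrite lownerle0; apply: psdmxD; apply: psdmxZ => //.
- by rewrite ler0c subr_ge0.
- by rewrite ler0c mulr_ge0.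
- exact: psdmx1.
Qed.

Lemma smoothed_test_le1 : lownerle Em 1%:M -> lownerle smoothed_test 1%:M.
Proof.
move=> Em_le1; rewrite /lownerle.
have -> : 1%:M - smoothed_test =
    ((1 - e)%:C)%C *: (1%:M - Em) + ((e * (1 - q))%:C)%C *: 1%:M.
  by apply/matrixP => i j; rewrite !mxE !rmorphB !rmorphM /= !rmorph1; ring.
apply: psdmxD; apply: psdmxZ => //.
- by rewrite ler0c subr_ge0.
- by rewrite ler0c mulr_ge0 ?subr_ge0.
- exact: psdmx1.
Qed.

Lemma mxtrace_smoothed_test X : psdmx Em -> psdmx X -> \tr X = 1 ->
  \tr (smoothed_test *m X) = (((1 - e) * complex.Re (\tr (Em *m X)) + e * q)%:C)%C.
Proof.
move=> pEm pX trX; rewrite mulmxDl linearD -!scalemxAl !linearZ /= mul1mx trX mulr1.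
rewrite -[\tr (Em *m X)]RRe_real ?ger0_real ?mxtrace_psdmx_mul_ge0 //.
by rewrite -rmorphM -rmorphD.
Qed.

End SmoothedTest.

Section Directions.
Variable R : realType.
Local Notation C := R[i].
Variables (N n : nat) (r : R) (P E : set 'M[C]_N).
Hypotheses (hP : P `<=` density (N:=N)) (hE : E `<=` density (N:=N)).

Lemma test_of_channel eps : gpo_errors n r P E eps ->
  exists2 t, type1_errors n r P E t & t <= eps.
Proof.
move=> [/andP[eps_ge0 _] [F [cpF [errF battF]]]].
set Em := hermpart (effectmx F).
have trEm X : psdmx X -> \tr (Em *m X) = F X i1 i1 by apply: mxtrace_channel_test.
have trEmC X : psdmx X -> \tr ((1%:M - Em) *m X) = F X i0 i0.
  have [_ trF] := cpF; move=> pX.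
  by rewrite mulmxBl mul1mx linearB /= trEm // -trF mxtrace2E addrK.
have Em_ge0 : lownerle 0 Em.
  rewrite lownerle0; split=> [|v]; first exact: adjmx_hermpart.
  rewrite -/(qform _ _) qform_mxtrace trEm; last exact: psdmx_outer.
  exact: psdmx_diag (cptp_psdmx cpF (psdmx_outer v)).
have Em_le1 : lownerle Em 1%:M.
  split=> [|v]; first by rewrite adjmxB adjmx1 adjmx_hermpart.
  rewrite -/(qform _ _) qform_mxtrace trEmC; last exact: psdmx_outer.
  exact: psdmx_diag (cptp_psdmx cpF (psdmx_outer v)).
exists (type1_error P Em).
  exists Em; do 2!split => //; split => // tau Etau; have [ptau _] := hE Etau.
  rewrite trEm //; have [M' [MM' ->]] := battF _ Etau; rewrite mxE /=.
  by rewrite powRN lef_pV2 ?posrE ?(lt_le_trans _ MM') ?powR_gt0.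
apply: sup_le_ge0 => // _ [rho Prho <-]; have [prho tr1] := hP Prho.
rewrite trEmC //; apply: le_trans (errF _ Prho); apply: tdist_ket1_ge.
  exact: cptp_psdmx.
by case: cpF => _ ->.
Qed.

(* Mixing in a small multiple of the identity makes tr (E1 tau) > 0, so that the
   battery state pi_(1 / tr (E1 tau)) is defined, at the price d in the error. *)
Lemma channel_of_test t d : 0 <= r -> type1_errors n r P E t -> 0 < d ->
  exists2 eps, gpo_errors n r P E eps & eps <= t + d.
Proof.
move=> r0 [Em [Em_ge0 [Em_le1 [hT {t}->]]]] d0.
set t := type1_error P Em; have t0 := type1_error_ge0 hP Em_ge0 Em_le1.
have t1 := type1_error_le1 hP Em_ge0 Em_le1.
set M := 2 `^ (n%:R * r); set q := M^-1.
have M1 : 1 <= M by rewrite /M -{1}(powRr0 2) ler_powR ?ler1n // mulr_ge0.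
have q0 : 0 < q by rewrite invr_gt0 (lt_le_trans ltr01).
have q1 : q <= 1 by rewrite invf_le1 // (lt_le_trans ltr01).
set e := Order.min d 1; have e0 : 0 < e by rewrite lt_min d0 ltr01.
have e1 : e <= 1 by rewrite ge_min lexx orbT.
have ed : e <= d by rewrite ge_min lexx.
have pEm : psdmx Em by rewrite -lownerle0.
set E1 := smoothed_test Em e q.
have E1_ge0 : lownerle 0 E1 by apply: smoothed_test_ge0 => //; apply: ltW.
have E1_le1 : lownerle E1 1%:M by apply: smoothed_test_le1 => //; apply: ltW.
have trE1 X := @mxtrace_smoothed_test R N Em e q X pEm.
have et_ge0 : 0 <= e * t by rewrite mulr_ge0 // ltW.
have eq_gt0 : 0 < e * q by rewrite mulr_gt0.
have eq_le : e * q <= e by rewrite ler_piMr // ltW.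
exists ((1 - e) * t + e * (1 - q)); last by lra.
split.
  have ft_ge0 : 0 <= (1 - e) * t by rewrite mulr_ge0 // subr_ge0.
  have ft_le : (1 - e) * t <= 1 - e by rewrite ler_piMr // subr_ge0.
  by apply/andP; split; lra.
exists (measure_prepare (binary_povm E1)).
split; first exact: measure_prepare_binary_cptp.
split=> [rho Prho | tau Etau].
  have [prho tr1] := hP Prho; have := type1_error_ge hP Em_ge0 Em_le1 Prho.
  rewrite tdist_measure_prepare_binary // !mulmxBl !mul1mx !linearB /= tr1 trE1 //.
  by rewrite /= -/t; nra.
have [ptau tr1] := hE Etau; have := hT _ Etau; rewrite powRN -/M -/q.
have : 0 <= complex.Re (\tr (Em *m tau)) := Re_ler (mxtrace_psdmx_mul_ge0 pEm ptau).
set x := complex.Re _ => x0 xq.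
exists ((1 - e) * x + e * q)^-1; split; last first.
  exact: measure_prepare_binary tr1 (trE1 _ ptau tr1).
have ex0 : 0 <= (1 - e) * x by rewrite mulr_ge0 // subr_ge0.
have exq : (1 - e) * x <= (1 - e) * q by rewrite ler_wpM2l // subr_ge0.
have y0 : 0 < (1 - e) * x + e * q by lra.
by rewrite -[M]invrK lef_pV2 ?posrE ?invr_gt0 // -/q; lra.
Qed.

Lemma type1_errors_ge0 t : type1_errors n r P E t -> 0 <= t.
Proof. by case=> Em [Em_ge0 [Em_le1 [_ ->]]]; apply: type1_error_ge0. Qed.

Lemma type1_errors_neq0 : type1_errors n r P E !=set0.
Proof.
exists (type1_error P 0), 0; split; first by rewrite lownerle0; apply: psdmx0.
split; first by rewrite /lownerle subr0; apply: psdmx1.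
by split=> // tau _; rewrite mul0mx linear0; apply: powR_ge0.
Qed.

Lemma gpo_errors_neq0 : 0 <= r -> gpo_errors n r P E !=set0.
Proof.
move=> r0; have [t Tt] := type1_errors_neq0.
by have [eps Geps _] := channel_of_test r0 Tt ltr01; exists eps.
Qed.

End Directions.

Lemma inf_le_approx (R : realType) (A B : set R) :
  A !=set0 -> has_lbound B ->
  (forall a, A a -> forall e, 0 < e -> exists2 b, B b & b <= a + e) ->
  inf B <= inf A.
Proof.
move=> A0 hB hAB; apply: lb_le_inf => // a Aa; apply/ler_addgt0Pr => e e0.
by have [b Bb le_ba] := hAB a Aa e e0; apply: le_trans (ge_inf hB Bb) le_ba.
Qed.

(* H = C^d, so H^{(x) n} = C^(d^n). *)
Theorem propositionS5 (R : realType) (d n : nat)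
    (P E : set 'M[R[i]]_(d ^ n)) (r : R) :
  P `<=` @density R (d ^ n) -> E `<=` @density R (d ^ n) -> 0 < r ->
  zeta_GPO n r P E = alpha_err n r P E.
Proof.
move=> hP hE /ltW r0; rewrite zeta_GPOE alpha_errE; apply/eqP; rewrite eq_le.
apply/andP; split; apply: inf_le_approx.
- exact: type1_errors_neq0.
- by exists 0 => eps [/andP[]].
- by move=> t Tt e e0; apply: channel_of_test.
- exact: gpo_errors_neq0.
- by exists 0 => t /(type1_errors_ge0 hP).
- move=> eps Geps e e0; have [t Tt le_teps] := test_of_channel hP hE Geps.
  by exists t => //; rewrite ler_wpDr // ltW.
Qed.
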